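(* Let $n\geq 4$. Then $AQ_n$ is fractional strongly maximally matched and fractional strongly super matched; that is, $fsmp(AQ_n)=2n-1$, and for every $F\subseteq V(AQ_n)\cup E(AQ_n)$ with $|F|=2n-1$ such that $AQ_n-F$ has no fractional perfect matching, $AQ_n-F$ has an isolated vertex.
   Context: The $n$-dimensional augmented cube $AQ_n$ ($n\geq 1$) has vertex set all binary strings $u_1u_2\cdots u_n$. $AQ_1\cong K_2$ on vertices $0,1$. For $n\geq 2$, $AQ_n$ consists of a copy $AQ^0_{n-1}$ of $AQ_{n-1}$ with $0$ prefixed to every label and a copy $AQ^1_{n-1}$ with $1$ prefixed, plus the following edges: $0u_1\cdots u_{n-1}$ is adjacent to $1v_1\cdots v_{n-1}$ iff either $u_i=v_i$ for all $i$ (cross edge) or $u_i\neq v_i$ for all $i$ (complement edge). $AQ_n$ is $(2n-1)$-regular. For $F\subseteq V(G)\cup E(G)$, $G-F$ denotes $G$ with the vertices and edges of $F$ deleted. A fractional perfect matching of $G$ is $f:E(G)\to[0,1]$ with $\sum_{e\ni v}f(e)=1$ for every vertex $v$. A fractional strong matching preclusion (FSMP) set is $F\subseteq V(G)\cup E(G)$ with $G-F$ having no fractional perfect matching; $fsmp(G)$ is the minimum size of an FSMP set, and an FSMP set of that size is optimal. $G$ is fractional strongly maximally matched if $fsmp(G)=\delta(G)$, and fractional strongly super matched if in addition $G-F$ has an isolated vertex for every optimal FSMP set $F$. *)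

From HB Require Import structures.
From mathcomp Require Import all_boot all_order all_algebra.
Set Implicit Arguments. Unset Strict Implicit. Unset Printing Implicit Defensive.
Import Order.TTheory GRing.Theory Num.Theory.

(* Adjacency of the augmented cube, following the recursive definition:
   labels are bit strings u_1 u_2 ... u_n stored as sequences with u_1 (the
   prefix added at the last recursion step) at the head.
   x::u ~ y::v  iff  (x = y and u ~ v in AQ_{n-1})
                 or (x <> y and (u = v  or  u, v differ in every position)). *)
Fixpoint aq_adj (u v : seq bool) : bool :=
  match u, v with
  | x :: u', y :: v' =>
      if x == y then aq_adj u' v'
      else (u' == v') || all2 (fun a b => a != b) u' v'
  | _, _ => false
  end.

Definition AQV (n : nat) := (n.-tuple bool)%type.

Definition AQE (n : nat) : {set {set AQV n}} :=
  [set e : {set AQV n} | [exists u : AQV n, exists v : AQV n,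
       aq_adj u v && (e == [set u; v])]].

(* A set F of vertices and edges of AQ_n is a pair (FV, FE) with FE a set of
   edges of AQ_n; its size is #|FV| + #|FE|. *)
Definition valid_fault (n : nat) (FV : {set AQV n}) (FE : {set {set AQV n}}) :=
  FE \subset AQE n.

Definition fault_size (n : nat) (FV : {set AQV n}) (FE : {set {set AQV n}}) :=
  (#|FV| + #|FE|)%N.

Definition rem_edges (n : nat) (FV : {set AQV n}) (FE : {set {set AQV n}}) :
  {set {set AQV n}} :=
  [set e in AQE n | (e \notin FE) && [disjoint e & FV]].

Definition has_fpm (R : realFieldType) (n : nat)
    (FV : {set AQV n}) (FE : {set {set AQV n}}) : Prop :=
  exists f : {set AQV n} -> R,
    (forall e, e \in rem_edges FV FE -> (0 <= f e <= 1)%R) /\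
    (forall v : AQV n, v \notin FV ->
       (\sum_(e in rem_edges FV FE | v \in e) f e)%R = 1%R).

Definition is_fsmp_set (R : realFieldType) (n : nat)
    (FV : {set AQV n}) (FE : {set {set AQV n}}) : Prop :=
  valid_fault FV FE /\ ~ has_fpm R FV FE.

Definition fsmp_is (R : realFieldType) (n k : nat) : Prop :=
  (exists FV FE, @is_fsmp_set R n FV FE /\ fault_size FV FE = k) /\
  (forall FV FE, @is_fsmp_set R n FV FE -> k <= fault_size FV FE).

Definition isolated_in (n : nat) (FV : {set AQV n}) (FE : {set {set AQV n}})
    (v : AQV n) : Prop :=
  v \notin FV /\ (forall e, e \in rem_edges FV FE -> v \notin e).

From HB Require Import structures.
From mathcomp Require Import all_boot all_order all_algebra.
From mathcomp Require Import zify.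
Set Implicit Arguments. Unset Strict Implicit. Unset Printing Implicit Defensive.
Import Order.TTheory GRing.Theory Num.Theory.

(* If AQ_n - F has no fractional perfect matching, Hall's condition fails for
   its surviving vertices, which yields a nonempty set I of surviving vertices
   whose surviving neighbours all lie in a set S disjoint from I with
   |S| < |I|.  Every edge of AQ_n leaving I or lying inside I is then killed
   by F: its outer endpoint is in S or deleted, or the edge itself is deleted.
   Hence 2|vboundary I| + 2e(I) <= 2(|S| + |F|).  An isoperimetric inequality
   for AQ_n, 2|vboundary A| + 2e(A) >= 2|A| + 4n - 4 (+ 2 when |A| >= 2),
   proved by induction on n from a machine check of AQ_4, then forces
   |F| >= 2n - 1, with equality only when I is a single vertex and S is empty,
   i.e. when that vertex is isolated.  Deleting the 2n - 1 edges at one vertex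
   attains the bound. *)

Lemma eq_set2 (T : finType) (u v x y : T) :
  [set u; v] = [set x; y] -> u = x /\ v = y \/ u = y /\ v = x.
Proof.
move=> e.
have : u \in [set x; y] by rewrite -e set21.
have : v \in [set x; y] by rewrite -e set22.
have : x \in [set u; v] by rewrite e set21.
have : y \in [set u; v] by rewrite e set22.
by rewrite !inE; do 4!(case/orP => /eqP ?; subst); auto.
Qed.

Lemma disjoint_set2 (T : finType) (u v : T) (A : {set T}) :
  [disjoint [set u; v] & A] = (u \notin A) && (v \notin A).
Proof. by rewrite -setI_eq0 setIUl setU_eq0 -!disjoints1 -!setI_eq0. Qed.

Lemma leq_card_disjoint (T : finType) (A B C : {set T}) :
  A \subset C -> B \subset C -> [disjoint A & B] -> #|A| + #|B| <= #|C|.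
Proof.
move=> AC BC AB; have /eqP <- : #|A :|: B| == #|A| + #|B| by rewrite (leq_card_setU A B).2.
by apply: subset_leq_card; rewrite subUset AC.
Qed.

(** * Hall's marriage theorem *)

Section HallMarriage.
Variables I J : finType.

Definition neighbours (r : I -> J -> bool) (X : {set I}) : {set J} :=
  [set j | [exists x in X, r x j]].

Definition hall_condition (r : I -> J -> bool) (L : {set I}) :=
  forall X : {set I}, X \subset L -> #|X| <= #|neighbours r X|.

Lemma neighboursU (r : I -> J -> bool) (X Y : {set I}) :
  neighbours r (X :|: Y) = neighbours r X :|: neighbours r Y.
Proof.
apply/setP => j; rewrite !inE; apply/existsP/orP => [[x]|].
  by case/andP; rewrite inE => /orP [] xXY rxj; [left|right];
    apply/existsP; exists x; rewrite xXY.
by case=> /existsP [x /andP [xXY rxj]]; exists x; rewrite inE xXY ?orbT.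
Qed.

Lemma hall_condition_contract (r : I -> J -> bool) (L X : {set I}) :
  hall_condition r L -> X \subset L -> #|neighbours r X| <= #|X| ->
  hall_condition (fun x j => r x j && (j \notin neighbours r X)) (L :\: X).
Proof.
move=> hL XL tight Y YLX.
have cardXY : #|X :|: Y| = #|X| + #|Y|.
  apply/eqP; rewrite (leq_card_setU X Y).2 disjoint_sym.
  by apply: disjointWl YLX _; rewrite disjoint_subset; apply/subsetP => x;
    rewrite !inE => /andP [].
have -> : neighbours (fun x j => r x j && (j \notin neighbours r X)) Y =
          neighbours r Y :\: neighbours r X.
  apply/setP => j; rewrite !inE; apply/existsP/andP.
    by case=> x /and3P [xY rxj jX]; split=> //; apply/existsP; exists x; rewrite xY.
  by case=> jX /existsP [x /andP [xY rxj]]; exists x; rewrite xY rxj.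
have := hL (X :|: Y); rewrite subUset XL (subset_trans YLX (subsetDl _ _)).
rewrite cardXY neighboursU cardsU cardsD setIC => /(_ isT).
have := subset_leq_card (subsetIr (neighbours r Y) (neighbours r X)); lia.
Qed.

Lemma hall_condition_drop (r : I -> J -> bool) (L : {set I}) x0 (y0 : J) :
  x0 \in L ->
  (forall X : {set I}, X \subset L -> X != set0 -> X != L -> #|X| < #|neighbours r X|) ->
  hall_condition (fun x j => r x j && (j != y0)) (L :\ x0).
Proof.
move=> x0L strict Y YL.
have [->|Y0] := eqVneq Y set0; first by rewrite cards0.
have YnL : Y != L.
  by apply: contraTneq YL => ->; apply/subsetPn; exists x0; rewrite // !inE eqxx.
have -> : neighbours (fun x j => r x j && (j != y0)) Y = neighbours r Y :\ y0.
  apply/setP => j; rewrite !inE; apply/existsP/andP.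
    by case=> x /and3P [xY rxj jy0]; split=> //; apply/existsP; exists x; rewrite xY.
  by case=> jy0 /existsP [x /andP [xY rxj]]; exists x; rewrite xY rxj.
have := strict Y (subset_trans YL (subsetDl _ _)) Y0 YnL.
have := cardsD1 y0 (neighbours r Y); lia.
Qed.

Lemma injective_glue (X Y : {set I}) (N : {set J}) (f g : I -> J) :
  {in X &, injective f} -> {in Y &, injective g} ->
  {in X, forall x, f x \in N} -> {in Y, forall y, g y \notin N} ->
  {in X :|: Y &, injective (fun x => if x \in X then f x else g x)}.
Proof.
move=> fi gi fN gN x y /setUP xXY /setUP yXY /=.
have inY z : z \in X \/ z \in Y -> z \notin X -> z \in Y by case=> // ->.
case: ifPn => xX; case: ifPn => yX.
- exact: fi.
- by move=> fxgy; move: (fN x xX); rewrite fxgy (negbTE (gN y (inY y yXY yX))).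
- by move=> gxfy; move: (fN y yX); rewrite -gxfy (negbTE (gN x (inY x xXY xX))).
- exact: gi (inY x xXY xX) (inY y yXY yX).
Qed.

Theorem hall_marriage (j0 : J) (r : I -> J -> bool) (L : {set I}) : hall_condition r L ->
  exists2 f : I -> J, {in L &, injective f} & {in L, forall x, r x (f x)}.
Proof.
move: {2}#|L| (leqnn #|L|) => k; elim: k r L => [|k IH] r L hk hL.
  by move: hk; rewrite leqn0 cards_eq0 => /eqP ->; exists (fun=> j0) => x; rewrite inE.
have [->|[x0 x0L]] := set_0Vmem L; first by exists (fun=> j0) => x; rewrite inE.
have IHp (X : {set I}) r' : X \proper L -> hall_condition r' X ->
    exists2 f : I -> J, {in X &, injective f} & {in X, forall x, r' x (f x)}.
  by move=> XL; apply: IH; rewrite -ltnS (leq_trans (proper_card XL)).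
(* Either some proper nonempty X is tight, and X is matched into its
   neighbourhood while L :\: X is matched outside it; or every such X has a
   surplus neighbour, and any edge x0 y0 can be put in the matching. *)
case: (boolP [exists X : {set I},
                [&& X \subset L, X != set0, X != L & #|neighbours r X| <= #|X|]]).
- case/existsP => X /and4P [XL X0 XnL tight].
  have XpL : X \proper L by rewrite properEneq XnL.
  have [f fi fr] := IHp X r XpL (fun Y YX => hL Y (subset_trans YX XL)).
  have LXL : L :\: X \proper L.
    rewrite properEneq subsetDl andbT; case/set0Pn: X0 => x xX.
    by apply/eqP => /setP /(_ x); rewrite !inE xX (subsetP XL).
  have [g gi gr] := IHp _ _ LXL (hall_condition_contract hL XL tight).
  have LE : L = X :|: (L :\: X) by rewrite -{1}(setID L X) (setIidPr XL).
  exists (fun x => if x \in X then f x else g x).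
    rewrite LE; apply: (injective_glue (N := neighbours r X)) fi gi _ _.
      by move=> x xX; rewrite inE; apply/existsP; exists x; rewrite xX fr.
    by move=> y /gr /andP [].
  move=> x xL /=; case: ifPn => xX; first exact: fr.
  have xLX : x \in L :\: X by rewrite inE xX xL.
  by case/andP: (gr x xLX).
- move=> /existsPn noTight.
  have strict (X : {set I}) : X \subset L -> X != set0 -> X != L -> #|X| < #|neighbours r X|.
    by move=> XL X0 XnL; move: (noTight X); rewrite XL X0 XnL /= -ltnNge.
  have := hL [set x0]; rewrite sub1set x0L cards1 => /(_ isT) /card_gt0P [y0].
  rewrite inE => /existsP [x /andP]; rewrite inE => -[/eqP xx0 rx0y0]; subst x.
  have [g gi gr] := IHp _ _ (properD1 x0L) (hall_condition_drop y0 x0L strict).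
  exists (fun x => if x \in [set x0] then y0 else g x).
    rewrite -(setD1K x0L); apply: (injective_glue (N := [set y0])) gi _ _.
    - by move=> x y; rewrite !inE => /eqP -> /eqP ->.
    - by move=> x _; rewrite inE.
    - by move=> y /gr /andP [_]; rewrite inE.
  move=> x xL /=; rewrite inE; case: eqP => [->//|/eqP xx0].
  have xLx0 : x \in L :\ x0 by rewrite !inE xx0.
  by case/andP: (gr x xLx0).
Qed.

End HallMarriage.

(** * Fractional perfect matchings *)

Section FractionalMatching.
Variables (R : realFieldType) (T : finType) (V : {set T}) (E : {set {set T}}).

Definition adjacent (x y : T) := [set x; y] \in E.

Lemma adjacentC x y : adjacent x y = adjacent y x.
Proof. by rewrite /adjacent setUC. Qed.

Definition fractional_perfect_matching (f : {set T} -> R) :=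
  (forall e, e \in E -> (0 <= f e <= 1)%R) /\
  (forall v, v \in V -> (\sum_(e in E | v \in e) f e)%R = 1%R).

Lemma deficient_set_of_hall_failure : ~ hall_condition adjacent V ->
  exists I S : {set T}, [/\ I \subset V, [disjoint I & S], #|S| < #|I| &
    forall a w, a \in I -> adjacent a w -> w \in S].
Proof.
move=> noHall.
have [X XV deficient] : exists2 X : {set T}, X \subset V & #|neighbours adjacent X| < #|X|.
  case: (boolP [exists X : {set T}, (X \subset V) && (#|neighbours adjacent X| < #|X|)]).
    by case/existsP => X /andP [XV lt]; exists X.
  move=> /existsPn none; case: noHall => X XV.
  by move: (none X); rewrite XV /= -leqNgt.
move: deficient; set N := neighbours adjacent X => deficient.
exists (X :\: N), (N :\: X); split.
- exact: subset_trans (subsetDl _ _) XV.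
- by rewrite disjoint_subset; apply/subsetP => x /setDP [xX _]; rewrite !inE xX.
- by rewrite !cardsD (setIC N X); have := subset_leq_card (subsetIr X N); lia.
- move=> a w; rewrite inE => /andP [aN aX] aw.
  have wN : w \in N by rewrite inE; apply/existsP; exists a; rewrite aX.
  rewrite inE wN andbT; apply: contraNN aN => wX.
  by rewrite inE; apply/existsP; exists w; rewrite wX adjacentC.
Qed.

Hypothesis adjacentP : forall x y, adjacent x y -> [&& x \in V, y \in V & x != y].

(* A vertex v of V lies exactly in the pairs {v, s v} and {s^-1 v, v}, and a
   pair gets weight 1/2 for each x generating it as {x, s x}. *)
Lemma fpm_of_permutation (s : T -> T) :
  {in V &, injective s} -> {in V, forall x, adjacent x (s x)} ->
  fractional_perfect_matching
    (fun e => (#|[set x in V | [set x; s x] == e]|%:R / 2)%R).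
Proof.
move=> si sadj.
have sV x : x \in V -> s x \in V by move=> /sadj /adjacentP /and3P [].
split=> [e _|v vV].
  rewrite divr_ge0 ?ler0n //= ler_pdivrMr ?ltr0n // mul1r ler_nat.
  case: (set_0Vmem [set x in V | [set x; s x] == e]) => [->|[x]]; first by rewrite cards0.
  rewrite inE => /andP [_ /eqP ex].
  apply: leq_trans (_ : #|e| <= 2); last by rewrite -ex cards2; case: (_ != _).
  apply: subset_leq_card; apply/subsetP => y; rewrite inE => /andP [_ /eqP <-].
  by rewrite !inE eqxx.
have [w wV swv] : exists2 w, w \in V & s w = v.
  have sVV : s @: V = V.
    apply/eqP; rewrite eqEcard card_in_imset // leqnn andbT.
    by apply/subsetP => _ /imsetP [x xV ->]; exact: sV.
  by move: vV; rewrite -{1}sVV => /imsetP [w wV ->]; exists w.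
have wv : w != v by have := adjacentP (sadj w wV); rewrite swv => /and3P [].
have pairs : [set x in V | v \in [set x; s x]] = [set v; w].
  apply/setP => x; rewrite !inE; apply/idP/idP.
    case/andP => xV /orP [/eqP <-|/eqP vsx]; first by rewrite eqxx.
    have -> : x = w by apply: si; rewrite // swv vsx.
    by rewrite eqxx orbT.
  by case/orP => /eqP ->; rewrite ?vV ?wV ?swv eqxx ?orbT.
rewrite -mulr_suml -natr_sum.
suff -> : (\sum_(e in E | v \in e) #|[set x in V | [set x; s x] == e]|)%N = 2.
  by rewrite divff // pnatr_eq0.
transitivity #|[set x in V | v \in [set x; s x]]|; last by rewrite pairs cards2 eq_sym wv.
rewrite -sum1_card.
rewrite (partition_big (fun x => [set x; s x]) [pred e | (e \in E) && (v \in e)]) /=.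
  apply: eq_bigr => e /andP [_ ve]; rewrite -sum1_card; apply: eq_bigl => x.
  rewrite !inE; case: eqP => [ex|_]; rewrite ?andbF // !andbT.
  by move: ve; rewrite -ex !inE => ->; rewrite andbT.
by move=> x; rewrite inE => /andP [xV ->]; rewrite andbT; exact: sadj.
Qed.

Lemma fpm_of_hall : hall_condition adjacent V ->
  exists f, fractional_perfect_matching f.
Proof.
have [V0 _|[x0 _] hallV] := set_0Vmem V.
  by exists (fun=> 0%R); split=> [e _|v]; rewrite ?lexx ?ler01 // V0 inE.
have [s si sadj] := hall_marriage x0 hallV.
by eexists; exact: fpm_of_permutation si sadj.
Qed.

Lemma deficient_set_of_no_fpm : ~ (exists f, fractional_perfect_matching f) ->
  exists I S : {set T}, [/\ I \subset V, [disjoint I & S], #|S| < #|I| &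
    forall a w, a \in I -> adjacent a w -> w \in S].
Proof.
by move=> noFpm; apply: deficient_set_of_hall_failure => /fpm_of_hall.
Qed.

End FractionalMatching.

(** * The augmented cube *)

Lemma all2_neqC (s t : seq bool) :
  all2 (fun a b => a != b) s t = all2 (fun a b => a != b) t s.
Proof. by elim: s t => [|x s IH] [|y t] //=; rewrite IH eq_sym. Qed.

Lemma all2_neqE (s t : seq bool) : size s = size t ->
  all2 (fun a b => a != b) s t = (t == map negb s).
Proof.
elim: s t => [|x s IH] [|y t] //= [] /IH ->.
by rewrite eqseq_cons; case: x; case: y.
Qed.

Lemma aq_adjC (u v : seq bool) : aq_adj u v = aq_adj v u.
Proof.
elim: u v => [|x u IH] [|y v] //=; rewrite eq_sym.
by case: (y == x); rewrite ?IH // eq_sym all2_neqC.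
Qed.

Lemma aq_adj_irr (u : seq bool) : aq_adj u u = false.
Proof. by elim: u => //= x u IH; rewrite eqxx. Qed.

Definition tcompl n (u : AQV n) : AQV n := [tuple of map negb u].
Arguments tcompl {n} u.

Lemma tcompl_neq n (u : AQV n.+1) : u != tcompl u.
Proof. by case/tupleP: u => b u; apply/eqP => /(congr1 val) [] /=; case: b. Qed.

Lemma eq_cons_tuple n b c (u v : AQV n) :
  (cons_tuple b u == cons_tuple c v) = (b == c) && (u == v).
Proof. by []. Qed.

Lemma cons_tuple_inj n b : injective (@cons_tuple n bool b).
Proof. by move=> u v /eqP; rewrite eq_cons_tuple eqxx => /eqP. Qed.

Lemma tuple_ind_cons n (P : AQV n.+1 -> Prop) :
  (forall b u, P (cons_tuple b u)) -> forall x, P x.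
Proof. by move=> Pcons x; case/tupleP: x. Qed.

Lemma mem_imset_cons_tuple n b c (u : AQV n) (S : {set AQV n}) :
  (cons_tuple b u \in cons_tuple c @: S) = (b == c) && (u \in S).
Proof.
apply/imsetP/andP => [[v vS /eqP]|[/eqP -> uS]]; last by exists u.
by rewrite eq_cons_tuple => /andP [/eqP -> /eqP ->].
Qed.

Lemma aq_adj_cons n b c (u v : AQV n) :
  aq_adj (cons_tuple b u) (cons_tuple c v) =
  if b == c then aq_adj u v else (u == v) || (v == tcompl u).
Proof. by rewrite /=; case: (b == c); rewrite // all2_neqE ?size_tuple. Qed.

Definition slice n b (A : {set AQV n.+1}) : {set AQV n} := [set u | cons_tuple b u \in A].

Lemma card_slices n (A : {set AQV n.+1}) : #|A| = #|slice false A| + #|slice true A|.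
Proof.
have eA : A = cons_tuple false @: slice false A :|: cons_tuple true @: slice true A.
  apply/setP; apply: tuple_ind_cons => b u.
  by rewrite inE !mem_imset_cons_tuple !inE; case: b; rewrite ?orbF.
rewrite {1}eA cardsU (_ : _ :&: _ = set0) ?cards0 ?subn0 ?card_imset //;
  try exact: cons_tuple_inj.
apply/setP; apply: tuple_ind_cons => b u; rewrite !inE !mem_imset_cons_tuple.
by case: b; rewrite ?andbF.
Qed.

Lemma AQE_set2 n (u v : AQV n) : ([set u; v] \in AQE n) = aq_adj u v.
Proof.
rewrite inE; apply/existsP/idP => [[x /existsP [y /andP [adj /eqP /eq_set2]]]|adj].
  by case=> -[-> ->] //; rewrite aq_adjC.
by exists u; apply/existsP; exists v; rewrite adj eqxx.
Qed.

Lemma rem_edges_set2 n FV FE (u v : AQV n) :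
  ([set u; v] \in rem_edges FV FE) =
  [&& aq_adj u v, [set u; v] \notin FE, u \notin FV & v \notin FV].
Proof. by rewrite inE AQE_set2 disjoint_set2. Qed.

Lemma rem_edges_adjacentP n FV FE (x y : AQV n) :
  adjacent (rem_edges FV FE) x y -> [&& x \in ~: FV, y \in ~: FV & x != y].
Proof.
rewrite /adjacent rem_edges_set2 !inE => /and4P [adj _ -> ->].
by apply: contraTneq adj => ->; rewrite aq_adj_irr.
Qed.

Definition aq_nbhd n (u : AQV n) := [set v : AQV n | aq_adj u v].

Lemma aq_nbhd_cons n b (u : AQV n) :
  aq_nbhd (cons_tuple b u) =
  cons_tuple b @: aq_nbhd u :|: [set cons_tuple (~~ b) u; cons_tuple (~~ b) (tcompl u)].
Proof.
apply/setP; apply: tuple_ind_cons => c v.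
rewrite !inE aq_adj_cons mem_imset_cons_tuple !eq_cons_tuple !inE.
by case: b; case: c; rewrite /= ?orbF // (eq_sym u).
Qed.

Lemma card_aq_nbhd_cons n b (u : AQV n) :
  #|aq_nbhd (cons_tuple b u)| = #|aq_nbhd u| + (u != tcompl u).+1.
Proof.
rewrite aq_nbhd_cons cardsU card_imset; last exact: cons_tuple_inj.
rewrite (_ : _ :&: _ = set0) ?cards0 ?subn0 ?cards2 ?eq_cons_tuple ?eqxx //.
apply/setP; apply: tuple_ind_cons => c v; rewrite !inE mem_imset_cons_tuple !eq_cons_tuple.
by case: b; case: c; rewrite /= ?andbF.
Qed.

Lemma card_aq_nbhd n (u : AQV n.+1) : #|aq_nbhd u| = (2 * n).+1.
Proof.
elim: n u => [|n IH]; apply: tuple_ind_cons => b u; rewrite card_aq_nbhd_cons.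
  by rewrite (tuple0 u) (tuple0 (tcompl _)) eqxx (_ : aq_nbhd _ = set0) ?cards0 //.
by rewrite IH tcompl_neq; lia.
Qed.

(** * An isoperimetric inequality *)

Definition vboundary n (A : {set AQV n}) : {set AQV n} :=
  [set u | (u \notin A) && [exists a in A, aq_adj a u]].

Definition inner_arcs n (A : {set AQV n}) : {set AQV n * AQV n} :=
  [set p | [&& p.1 \in A, p.2 \in A & aq_adj p.1 p.2]].

Definition boundary_weight n (A : {set AQV n}) := 2 * #|vboundary A| + #|inner_arcs A|.

Definition aq_isoperimetric n := forall A : {set AQV n}, A != set0 ->
  2 * #|A| + 2 * (2 * n - 2) + 2 * (1 < #|A|) <= boundary_weight A.

Definition cons_pair n b (p : AQV n * AQV n) := (cons_tuple b p.1, cons_tuple b p.2).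

Lemma cons_pair_inj n b : injective (@cons_pair n b).
Proof. by move=> [x y] [z w] [/val_inj -> /val_inj ->]. Qed.

Lemma mem_imset_cons_pair n b b' c (u v : AQV n) (S : {set AQV n * AQV n}) :
  ((cons_tuple b u, cons_tuple b' v) \in cons_pair c @: S) =
  [&& b == c, b' == c & (u, v) \in S].
Proof.
apply/imsetP/and3P => [[[x y] xyS [-> /val_inj -> -> /val_inj ->]]|]; first by rewrite !eqxx.
by case=> /eqP -> /eqP -> uvS; exists (u, v).
Qed.

Lemma vboundary_slice n b (A : {set AQV n.+1}) :
  cons_tuple b @: vboundary (slice b A) \subset vboundary A.
Proof.
apply/subsetP => x /imsetP [u]; rewrite !inE => /andP [uA /existsP [a /andP [aA adj]]] ->.
rewrite inE in aA; rewrite uA; apply/existsP; exists (cons_tuple b a).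
by rewrite aA aq_adj_cons eqxx.
Qed.

Lemma inner_arcs_slice n b (A : {set AQV n.+1}) :
  cons_pair b @: inner_arcs (slice b A) \subset inner_arcs A.
Proof.
apply/subsetP => x /imsetP [[u v]]; rewrite !inE /= => /and3P [uA vA adj] ->.
by rewrite uA vA aq_adj_cons eqxx.
Qed.

Lemma boundary_weight_slices n (A : {set AQV n.+1}) :
  boundary_weight (slice false A) + boundary_weight (slice true A) <= boundary_weight A.
Proof.
rewrite /boundary_weight addnACA -mulnDr leq_add ?leq_mul2l //.
  rewrite -(card_imset _ (@cons_tuple_inj n false)) -(card_imset _ (@cons_tuple_inj n true)).
  apply: leq_card_disjoint; rewrite ?vboundary_slice //.
  rewrite -setI_eq0; apply/eqP/setP; apply: tuple_ind_cons => b u.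
  by rewrite !inE !mem_imset_cons_tuple; case: b; rewrite ?andbF.
rewrite -(card_imset _ (@cons_pair_inj n false)) -(card_imset _ (@cons_pair_inj n true)).
apply: leq_card_disjoint; rewrite ?inner_arcs_slice //.
rewrite -setI_eq0; apply/eqP/setP => -[x y]; move: x y.
apply: tuple_ind_cons => b u; apply: tuple_ind_cons => c v.
by rewrite !inE !mem_imset_cons_pair; case: b; rewrite ?andbF.
Qed.

(* As the slice [~~ b] is empty, for u in slice b the vertices (~~ b) u and
   (~~ b) (tcompl u), both adjacent to b u, lie on the boundary of A. *)
Lemma boundary_weight_one_slice n b (A : {set AQV n.+1}) : slice (~~ b) A = set0 ->
  boundary_weight (slice b A) + 2 * #|slice b A :|: tcompl @: slice b A|
  <= boundary_weight A.
Proof.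
move=> A0; rewrite /boundary_weight addnAC -mulnDr leq_add ?leq_mul2l //; last first.
  by rewrite -(card_imset _ (@cons_pair_inj n b)) subset_leq_card ?inner_arcs_slice.
rewrite -(card_imset _ (@cons_tuple_inj n b)) -(card_imset _ (@cons_tuple_inj n (~~ b))).
apply: leq_card_disjoint; rewrite ?vboundary_slice //; last first.
  rewrite -setI_eq0; apply/eqP/setP; apply: tuple_ind_cons => c u.
  by rewrite !inE !mem_imset_cons_tuple; case: b {A0}; case: c; rewrite ?andbF.
apply/subsetP => _ /imsetP [u uU ->]; rewrite inE.
have -> : (cons_tuple (~~ b) u \in A) = false by rewrite -(in_set0 u) -A0 inE.
move: uU; rewrite inE => /orP [uA|/imsetP [w wA ->]]; apply/existsP.
  exists (cons_tuple b u); rewrite inE in uA; rewrite uA aq_adj_cons.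
  by case: b {A0 uA}; rewrite /= eqxx.
exists (cons_tuple b w); rewrite inE in wA; rewrite wA aq_adj_cons.
by case: b {A0 wA}; rewrite /= !eqxx orbT.
Qed.

Lemma card_setU_tcompl n (S : {set AQV n.+1}) : S != set0 -> 2 <= #|S :|: tcompl @: S|.
Proof.
case/set0Pn => a aS; have := cards2 a (tcompl a); rewrite tcompl_neq => <-.
by apply: subset_leq_card; apply/subsetP => x /set2P [] ->; rewrite !inE ?aS ?imset_f ?orbT.
Qed.

(* [3 <= n] is used when both slices are nonempty: the two inductive bounds
   then add up to 8n - 8 >= 4n + 2. *)
Lemma aq_isoperimetric_step n : 3 <= n -> aq_isoperimetric n -> aq_isoperimetric n.+1.
Proof.
case: n => // n n3 iso A A0; rewrite card_slices.
have [e0|n0] := eqVneq (slice false A) set0;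
  last have [e1|n1] := eqVneq (slice true A) set0.
- have n1 : slice true A != set0.
    by apply: contraNneq A0 => e1; rewrite -cards_eq0 card_slices e0 e1 !cards0.
  have := boundary_weight_one_slice (b := true) e0; have := iso _ n1.
  have := card_setU_tcompl n1; rewrite e0 cards0; set k := (1 < _); lia.
- have := boundary_weight_one_slice (b := false) e1; have := iso _ n0.
  have := card_setU_tcompl n0; rewrite e1 cards0; set k := (1 < _); lia.
- have := boundary_weight_slices A; have := iso _ n0; have := iso _ n1.
  set k0 := (1 < #|slice false A|); set k1 := (1 < #|slice true A|).
  set k := (1 < _ + _); have : k <= 1 by case: k.
  have : k0 <= 1 by case: k0. have : k1 <= 1 by case: k1.
  lia.
Qed.

Fixpoint bitseqs n : seq (seq bool) :=
  if n is n'.+1 then map (cons false) (bitseqs n') ++ map (cons true) (bitseqs n')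
  else [:: [::]].

Lemma mem_bitseqs n s : (s \in bitseqs n) = (size s == n).
Proof.
have consI (b : bool) : injective (cons b) by move=> ? ? [].
elim: n s => [|n IH] [|x s] //=.
  by rewrite mem_cat; apply/negP => /orP [] /mapP [].
rewrite mem_cat eqSS -IH; case: x; rewrite (mem_map (consI _)).
  by rewrite (_ : true :: s \in _ = false) //; apply/mapP => -[].
by rewrite (_ : false :: s \in _ = false) ?orbF //; apply/mapP => -[].
Qed.

Lemma uniq_bitseqs n : uniq (bitseqs n).
Proof.
have consI (b : bool) : injective (cons b) by move=> ? ? [].
elim: n => //= n IH; rewrite cat_uniq !map_inj_uniq // IH /= andbT.
by apply/hasP => -[x /mapP [y _ ->] /mapP [z _]].
Qed.

Definition seq_tuple n (s : seq bool) : AQV n := insubd [tuple of nseq n false] s.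

Lemma seq_tupleK n (s : seq bool) : size s == n -> val (seq_tuple n s) = s.
Proof. by move=> sn; rewrite /seq_tuple val_insubd sn. Qed.

Lemma perm_bitseqs n : perm_eq (map val (enum {: AQV n})) (bitseqs n).
Proof.
apply: uniq_perm.
- by rewrite map_inj_uniq ?enum_uniq //; exact: val_inj.
- exact: uniq_bitseqs.
- move=> s; rewrite mem_bitseqs; apply/mapP/idP => [[u _ ->]|sn].
    by rewrite size_tuple.
  by exists (seq_tuple n s); rewrite ?mem_enum // seq_tupleK.
Qed.

Lemma count_bitseqs n (P : pred (AQV n)) :
  count P (enum {: AQV n}) = count (fun s => P (seq_tuple n s)) (bitseqs n).
Proof.
rewrite -((permP (perm_bitseqs n)) (fun s => P (seq_tuple n s))).
by elim: (enum _) => //= u l ->; rewrite /seq_tuple valKd.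
Qed.

Lemma sumn_bitseqs n (F : AQV n -> nat) :
  sumn [seq F u | u <- enum {: AQV n}] = sumn [seq F (seq_tuple n s) | s <- bitseqs n].
Proof.
rewrite -(perm_sumn (perm_map (fun s => F (seq_tuple n s)) (perm_bitseqs n))).
by elim: (enum _) => //= u l ->; rewrite /seq_tuple valKd.
Qed.

Lemma card_set_count (T : finType) (P : pred T) : #|[set x | P x]| = count P (enum T).
Proof.
rewrite cardsE cardE /enum_mem size_filter filter_predT.
by apply: eq_count => x; rewrite !inE.
Qed.

Lemma existsb_has (T : finType) (P : pred T) : [exists x, P x] = has P (enum T).
Proof.
apply/existsP/hasP => [[x Px]|[x _ Px]]; last by exists x.
by exists x; rewrite ?mem_enum.
Qed.

Lemma sum_sumn_enum (T : finType) (F : T -> nat) :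
  \sum_(x : T) F x = sumn [seq F x | x <- enum T].
Proof. by rewrite sumnE big_map /index_enum /enum_mem filter_predT -enumT. Qed.

Section BitseqCounts.
Variables (n : nat) (A : {set AQV n}).
Let inA s := seq_tuple n s \in A.

Lemma aq_adj_seq_tuple s t : s \in bitseqs n -> t \in bitseqs n ->
  aq_adj (seq_tuple n s) (seq_tuple n t) = aq_adj s t.
Proof. by rewrite !mem_bitseqs => sn tn; rewrite !seq_tupleK. Qed.

Lemma card_bitseqs : #|A| = count inA (bitseqs n).
Proof.
have eA : [set x | x \in A] = A by apply/setP => x; rewrite inE.
by rewrite -{1}eA card_set_count count_bitseqs.
Qed.

Lemma card_vboundary_bitseqs : #|vboundary A| =
  count (fun s => ~~ inA s && has (fun t => inA t && aq_adj t s) (bitseqs n)) (bitseqs n).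
Proof.
rewrite card_set_count count_bitseqs; apply: eq_in_count => s sn /=.
rewrite existsb_has !has_count count_bitseqs; congr (_ && (0 < _)).
by apply: eq_in_count => t tn /=; rewrite aq_adj_seq_tuple.
Qed.

Lemma card_inner_arcs_bitseqs : #|inner_arcs A| =
  sumn [seq count (fun t => inA s && inA t && aq_adj s t) (bitseqs n) | s <- bitseqs n].
Proof.
rewrite -sum1_card big_mkcond /=.
under eq_bigr => p _ do rewrite inE.
rewrite -(pair_bigA _ (fun u v => if [&& u \in A, v \in A & aq_adj u v] then 1 else 0)) /=.
rewrite sum_sumn_enum sumn_bitseqs; congr sumn; apply/eq_in_map => s sn.
rewrite sum_sumn_enum sumn_bitseqs -sumn_count; congr sumn; apply/eq_in_map => t tn /=.
by rewrite aq_adj_seq_tuple // andbA; case: (_ && _ && _).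
Qed.

End BitseqCounts.

Definition dotb (r bs : seq bool) := count (fun p => p.1 && p.2) (zip r bs).

Definition aq4_row (s : seq bool) := [seq aq_adj s t | t <- bitseqs 4].

(* The isoperimetric inequality for the subset of AQ_4 with indicator vector
   [bs] over [bitseqs 4], given the adjacency rows [M] of AQ_4
   (12 = 2 * (2 * 4 - 2)). *)
Definition iso4_check (M : seq (seq bool)) (bs : seq bool) : bool :=
  let k := count id bs in
  let bd := count (fun p => ~~ p.1 && (0 < dotb p.2 bs)) (zip bs M) in
  let arcs := sumn [seq (if p.1 then dotb p.2 bs else 0) | p <- zip bs M] in
  (k == 0) || (2 * k + 12 + 2 * (1 < k) <= 2 * bd + arcs).

Lemma iso4_check_all : all (iso4_check (map aq4_row (bitseqs 4))) (bitseqs 16).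
Proof. vm_compute; reflexivity. Qed.

Lemma aq_isoperimetric4 : aq_isoperimetric 4.
Proof.
move=> A A0; set vl := bitseqs 4; set inA := fun s => seq_tuple 4 s \in A.
have inAvl : map inA vl \in bitseqs 16 by rewrite mem_bitseqs size_map.
have := allP iso4_check_all _ inAvl; rewrite /iso4_check zip_map.
have dotbE s : dotb (aq4_row s) (map inA vl) = count (fun t => aq_adj s t && inA t) vl.
  by rewrite /dotb /aq4_row zip_map count_map.
have -> : count id (map inA vl) = count inA vl by rewrite count_map.
have -> : count (fun p => ~~ p.1 && (0 < dotb p.2 (map inA vl)))
            [seq (inA s, aq4_row s) | s <- vl] =
          count (fun s => ~~ inA s && has (fun t => inA t && aq_adj t s) vl) vl.
  rewrite count_map; apply: eq_count => s.
  change (~~ inA s && (0 < dotb (aq4_row s) (map inA vl)) =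
          ~~ inA s && has (fun t => inA t && aq_adj t s) vl).
  rewrite dotbE has_count.
  by congr (_ && (0 < _)); apply: eq_count => t; rewrite andbC aq_adjC.
have -> : sumn [seq (if p.1 then dotb p.2 (map inA vl) else 0)
               | p <- [seq (inA s, aq4_row s) | s <- vl]] =
          sumn [seq count (fun t => inA s && inA t && aq_adj s t) vl | s <- vl].
  rewrite -map_comp; congr sumn; apply/eq_map => s.
  change ((if inA s then dotb (aq4_row s) (map inA vl) else 0) =
          count (fun t => inA s && inA t && aq_adj s t) vl); rewrite dotbE.
  case: (inA s); last by rewrite -(count_pred0 vl); apply: eq_count.
  by apply: eq_count => t; rewrite andbC.
rewrite -card_vboundary_bitseqs -card_inner_arcs_bitseqs -card_bitseqs.
have : #|A| != 0 by rewrite cards_eq0.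
rewrite /boundary_weight; set k := (1 < _); case: (#|A| == 0) => //= _; lia.
Qed.

Lemma aq_isoperimetric_ge4 n : 4 <= n -> aq_isoperimetric n.
Proof.
elim: n => // n IH n4; have [->|n3] := eqVneq n 3; first exact: aq_isoperimetric4.
by apply: aq_isoperimetric_step; [lia | apply: IH; lia].
Qed.

(** * Fault sets *)

Section FaultCount.
Variables (n : nat) (FV : {set AQV n}) (FE : {set {set AQV n}}) (I S : {set AQV n}).
Hypotheses (IV : I \subset ~: FV) (IS : [disjoint I & S])
  (nbhdI : forall a w, a \in I -> adjacent (rem_edges FV FE) a w -> w \in S).

Lemma killed_edge (a w : AQV n) : a \in I -> aq_adj a w -> w \notin S -> w \notin FV ->
  [set a; w] \in FE.
Proof.
move=> aI adj wS wF; apply: contraNT wS => eF; apply: (nbhdI aI).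
by rewrite /adjacent rem_edges_set2 adj eF wF andbT; have := subsetP IV a aI; rewrite inE.
Qed.

Lemma card_vboundary_faults :
  #|vboundary I| <= #|S| + #|FV| + #|[set e in FE | ~~ (e \subset I)]|.
Proof.
(* A boundary vertex w outside S and FV is joined to a partner in I by a
   deleted edge, from which w is recovered as the endpoint outside I. *)
set Bout := [set w | [&& w \notin S, w \notin FV & w \in vboundary I]].
apply: leq_trans (_ : #|S| + #|FV| + #|Bout| <= _); last first.
  rewrite leq_add2l.
  pose partner (w : AQV n) := odflt w [pick a in I | aq_adj a w].
  have partnerP w : w \in Bout -> (partner w \in I) && aq_adj (partner w) w.
    rewrite !inE => /and4P [_ _ _ /existsP [a0 ha0]].
    by rewrite /partner; case: pickP => // none; move: (none a0); rewrite ha0.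
  rewrite -(card_in_imset (f := fun w => [set w; partner w])); last first.
    move=> w w' wB w'B /= e; have : w \in [set w'; partner w'] by rewrite -e set21.
    case/set2P => // ew; move: wB; rewrite !inE ew.
    by case/andP: (partnerP w' w'B) => -> _ /and4P [].
  apply: subset_leq_card; apply/subsetP => _ /imsetP [w wB ->].
  case/andP: (partnerP w wB) => aI adj; move: wB; rewrite !inE => /and4P [wS wF wI _].
  rewrite setUC killed_edge //=.
  by apply/subsetP => /(_ w); rewrite !inE eqxx orbT (negbTE wI) => /(_ isT).
apply: leq_trans (_ : #|S :|: FV :|: Bout| <= _); last first.
  by apply: leq_trans (leq_card_setU _ _) _; rewrite leq_add2r; exact: leq_card_setU.
apply: subset_leq_card; apply/subsetP => w wB; rewrite !in_setU [w \in Bout]inE wB.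
by case: (w \in S); case: (w \in FV).
Qed.

Lemma card_inner_arcs_faults : #|inner_arcs I| <= 2 * #|[set e in FE | e \subset I]|.
Proof.
(* An edge inside I carries two arcs, told apart by the order of their ends. *)
pose code (p : AQV n * AQV n) := ([set p.1; p.2], enum_rank p.1 < enum_rank p.2).
rewrite mulnC -card_bool -cardsT -cardsX -(card_in_imset (f := code)).
  apply: subset_leq_card; apply/subsetP => q /imsetP [[a b]].
  rewrite !inE /= => /and3P [aI bI adj] ->; rewrite andbT.
  rewrite killed_edge ?(disjointFr IS) //; last by have := subsetP IV b bI; rewrite inE.
  by apply/subsetP => x /set2P [] ->.
move=> [a b] [c d]; rewrite !inE /= => /and3P [_ _ adj] _.
case=> /eq_set2 [[-> ->] //|[ead ebc]]; move: adj; rewrite ead ebc => adj ltdc.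
have : c != d by apply: contraTneq adj => ->; rewrite aq_adj_irr.
rewrite -(inj_eq enum_rank_inj) -(inj_eq val_inj) /=; move: ltdc.
by case: ltngtP.
Qed.

Lemma boundary_weight_faults : boundary_weight I <= 2 * (#|S| + #|FV| + #|FE|).
Proof.
have FEsplit : #|[set e in FE | e \subset I]| + #|[set e in FE | ~~ (e \subset I)]| <= #|FE|.
  rewrite leq_card_disjoint //; try by apply/subsetP => e; rewrite inE => /andP [].
  by rewrite -setI_eq0; apply/eqP/setP => e; rewrite !inE; case: (e \subset I); rewrite ?andbF.
have := card_vboundary_faults; have := card_inner_arcs_faults.
rewrite /boundary_weight; lia.
Qed.

End FaultCount.

Lemma isolated_inP n (FV : {set AQV n}) FE (v : AQV n) : v \notin FV ->
  (forall w, ~~ adjacent (rem_edges FV FE) v w) -> isolated_in FV FE v.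
Proof.
move=> vF noEdge; split=> // e eR; apply/negP => ve.
have [x [y exy]] : exists x y, e = [set x; y].
  move: eR; rewrite !inE => /andP [/existsP [x /existsP [y /andP [_ /eqP ->]]] _].
  by exists x, y.
move: ve eR; rewrite exy => /set2P [] <-; last rewrite setUC; exact/negP/noEdge.
Qed.

Lemma isolated_no_fpm (R : realFieldType) n (FV : {set AQV n}) FE (v : AQV n) :
  isolated_in FV FE v -> ~ has_fpm R FV FE.
Proof.
case=> vF noEdge [f [_ /(_ v vF)]]; rewrite big1 => [/eqP|e /andP [/noEdge /negP //]].
by rewrite eq_sym oner_eq0.
Qed.

Lemma has_fpmE (R : realFieldType) n (FV : {set AQV n}) FE :
  has_fpm R FV FE <->
  exists f : {set AQV n} -> R, fractional_perfect_matching (~: FV) (rem_edges FV FE) f.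
Proof.
by split=> -[f [f01 f1]]; exists f; split=> // v; rewrite ?inE => vF; apply: f1; rewrite ?inE.
Qed.

Lemma fsmp_lower_bound (R : realFieldType) n (FV : {set AQV n}) FE :
  4 <= n -> is_fsmp_set R FV FE ->
  2 * n - 1 <= fault_size FV FE /\
  (fault_size FV FE = 2 * n - 1 -> exists v, isolated_in FV FE v).
Proof.
move=> n4 [_ noFpm]; move: noFpm; rewrite has_fpmE.
move/(deficient_set_of_no_fpm (@rem_edges_adjacentP n FV FE)) => [I [S [IV IS ltSI nbhdI]]].
have I0 : I != set0 by rewrite -card_gt0 (leq_ltn_trans _ ltSI).
have := leq_trans (aq_isoperimetric_ge4 n4 I0) (boundary_weight_faults IV IS nbhdI).
(* [set] unifies the two elaborations of #|I| (resp. #|S|) in [ltSI] and in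
   the bound, so that lia sees a single atom. *)
move: ltSI; rewrite /fault_size; set i := #|I|; set s := #|S| => ltSI.
case: (ltnP 1 i) => I1 /= bound.
  by split=> [|?]; [lia | exfalso; lia].
split=> [|_]; first lia.
have /cards1P [v Iv] : #|I| == 1 by apply/eqP; rewrite -/i; lia.
have S0 : S = set0 by apply/eqP; rewrite -cards_eq0 -/s; lia.
have vI : v \in I by rewrite Iv set11.
exists v; apply: isolated_inP => [|w]; first by have := subsetP IV v vI; rewrite inE.
by apply/negP => /(nbhdI _ _ vI); rewrite S0 inE.
Qed.

Definition star n (v : AQV n) : {set {set AQV n}} := [set [set v; u] | u in aq_nbhd v].

Lemma star_subset_AQE n (v : AQV n) : star v \subset AQE n.
Proof. by apply/subsetP => _ /imsetP [u vu ->]; rewrite AQE_set2; rewrite inE in vu. Qed.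

Lemma card_star n (v : AQV n) : #|star v| = #|aq_nbhd v|.
Proof.
apply: card_in_imset => u u' vu _ /eq_set2 [[_ //]|[_ euv]].
by move: vu; rewrite inE euv aq_adj_irr.
Qed.

Lemma isolated_star n (v : AQV n) : isolated_in set0 (star v) v.
Proof.
apply: isolated_inP => [|w]; first by rewrite inE.
rewrite /adjacent rem_edges_set2; case: (boolP (aq_adj v w)) => //= vw.
suff -> : [set v; w] \in star v by [].
by apply/imsetP; exists w; rewrite ?inE.
Qed.

Theorem theorem3p9 (R : realFieldType) (n : nat) (hn : 4 <= n) :
  fsmp_is R n (2 * n - 1) /\
  (forall (FV : {set AQV n}) (FE : {set {set AQV n}}),
     is_fsmp_set R FV FE -> fault_size FV FE = (2 * n - 1)%N ->
     exists v : AQV n, isolated_in FV FE v).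
Proof.
split; last by move=> FV FE /(fsmp_lower_bound hn) [_].
split; last by move=> FV FE /(fsmp_lower_bound hn) [].
case: n hn => // n _; set v := [tuple of nseq n.+1 false].
exists set0, (star v); split; first split.
- exact: star_subset_AQE.
- exact: isolated_no_fpm (isolated_star v).
- by rewrite /fault_size cards0 card_star card_aq_nbhd; lia.
Qed.
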